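(* Let $\mathcal{T}=\{0,1\}$, let $P\in\Delta_{\mathcal{T},\mathcal{X},\mathcal{Y}}$ with $P(T=0)>0$, $P(T=1)>0$, and suppose $Q^*\in\arg\max_{Q\in\Delta_P}H_Q(T\mid X,Y)$ lies in the relative interior of $\Delta_P$. If $\mathcal{X}_0=\mathcal{X}_1$ and $\mathcal{Y}_0\ne\mathcal{Y}_1$, then $T$ is conditionally independent of $X$ given $Y$ under $Q^*$. If $\mathcal{Y}_0=\mathcal{Y}_1$ and $\mathcal{X}_0\neq\mathcal{X}_1$, then $T$ is conditionally independent of $Y$ given $X$ under $Q^*$.
   Context: $T,X,Y$ are random variables with finite state spaces $\mathcal{T},\mathcal{X},\mathcal{Y}$; $\Delta_{\mathcal{T},\mathcal{X},\mathcal{Y}}$ is the set of all joint distributions on $\mathcal{T}\times\mathcal{X}\times\mathcal{Y}$. For $P\in\Delta_{\mathcal{T},\mathcal{X},\mathcal{Y}}$, $\Delta_P=\{Q\in\Delta_{\mathcal{T},\mathcal{X},\mathcal{Y}}: Q(X=x,T=t)=P(X=x,T=t),\ Q(Y=y,T=t)=P(Y=y,T=t)\ \forall x,y,t\}$. For $t\in\{0,1\}$: $\mathcal{X}_t=\{x: P(X=x\mid T=t)>0\}$, $\mathcal{Y}_t=\{y: P(Y=y\mid T=t)>0\}$. *)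

From mathcomp Require Import all_boot.
From Stdlib Require Import Reals.
Set Implicit Arguments. Unset Strict Implicit. Unset Printing Implicit Defensive.

Local Open Scope R_scope.

(* A (candidate) joint distribution on T x X x Y with T = {0,1} represented by bool
   (false = 0, true = 1). *)
Definition jdist (X Y : finType) := bool -> X -> Y -> R.

Definition rsum (I : finType) (F : I -> R) : R := \big[Rplus/0]_(i : I) F i.

Section Defs.
Variables X Y : finType.

Definition is_dist (Q : jdist X Y) : Prop :=
  (forall t x y, 0 <= Q t x y) /\
  rsum (fun t : bool => rsum (fun x : X => rsum (fun y : Y => Q t x y))) = 1.

Definition PT (Q : jdist X Y) (t : bool) : R :=
  rsum (fun x : X => rsum (fun y : Y => Q t x y)).
Definition PXT (Q : jdist X Y) (x : X) (t : bool) : R := rsum (fun y : Y => Q t x y).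
Definition PYT (Q : jdist X Y) (y : Y) (t : bool) : R := rsum (fun x : X => Q t x y).
Definition PXY (Q : jdist X Y) (x : X) (y : Y) : R := rsum (fun t : bool => Q t x y).
Definition PX (Q : jdist X Y) (x : X) : R := rsum (fun t : bool => PXT Q x t).
Definition PY (Q : jdist X Y) (y : Y) : R := rsum (fun t : bool => PYT Q y t).

Definition DeltaP (P Q : jdist X Y) : Prop :=
  is_dist Q /\
  (forall x t, PXT Q x t = PXT P x t) /\
  (forall y t, PYT Q y t = PYT P y t).

Definition condEntropy_T_XY (Q : jdist X Y) : R :=
  - rsum (fun t : bool => rsum (fun x : X => rsum (fun y : Y =>
      if Rlt_dec 0 (Q t x y) then Q t x y * ln (Q t x y / PXY Q x y) else 0))).

Definition is_argmax_H (P Q : jdist X Y) : Prop :=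
  DeltaP P Q /\ forall Q', DeltaP P Q' -> condEntropy_T_XY Q' <= condEntropy_T_XY Q.

Definition affine_hull (C : jdist X Y -> Prop) (Q : jdist X Y) : Prop :=
  exists s : seq (R * jdist X Y),
    (forall p, List.In p s -> C p.2) /\
    \big[Rplus/0]_(p <- s) p.1 = 1 /\
    forall t x y, Q t x y = \big[Rplus/0]_(p <- s) (p.1 * p.2 t x y).

Definition rel_interior (C : jdist X Y -> Prop) (Q : jdist X Y) : Prop :=
  C Q /\ exists eps, 0 < eps /\
    forall Q', affine_hull C Q' ->
      (forall t x y, Rabs (Q' t x y - Q t x y) < eps) -> C Q'.

Definition Xsupp (P : jdist X Y) (t : bool) (x : X) : Prop := PXT P x t / PT P t > 0.
Definition Ysupp (P : jdist X Y) (t : bool) (y : Y) : Prop := PYT P y t / PT P t > 0.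

Definition CI_T_X_given_Y (Q : jdist X Y) : Prop :=
  forall t x y, Q t x y * PY Q y = PYT Q y t * PXY Q x y.
Definition CI_T_Y_given_X (Q : jdist X Y) : Prop :=
  forall t x y, Q t x y * PX Q x = PXT Q x t * PXY Q x y.

End Defs.

(* A point of the relative interior of [DeltaP P] is positive wherever some other point
   of [DeltaP P] is, in particular on the product of the supports of [P(x|t)] and [P(y|t)]
   (witness: the product coupling [P(x|t) P(y|t) P(t)]).  Perturbing the maximiser along
   [δ (1_{x1 y1} - 1_{x1 y2} - 1_{x2 y1} + 1_{x2 y2})] inside one slice [T = t] stays in
   [DeltaP P], so the derivative of [H(T|X,Y)] vanishes: [log Q(t|x,y)] has vanishing
   mixed differences on these rectangles.  If [y0] lies in the support of [Y|T=t0] but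
   not of [Y|T=1-t0], then [Q(t0|x,y0) = 1] for every [x], so [Q(t0|x,y)] does not depend
   on [x]; this is the conditional independence.  The other case follows by exchanging
   the roles of [X] and [Y]. *)

From HB Require Import structures.
From mathcomp Require Import all_boot.
From Stdlib Require Import Reals Lra Psatz Classical FunctionalExtensionality.
From Coquelicot Require Import Coquelicot.
Set Implicit Arguments. Unset Strict Implicit. Unset Printing Implicit Defensive.
Local Open Scope R_scope.

Lemma Rplus_assoc_law : associative Rplus. Proof. by move=> *; ring. Qed.
Lemma Rmult_assoc_law : associative Rmult. Proof. by move=> *; ring. Qed.
HB.instance Definition _ :=
  Monoid.isComLaw.Build R 0 Rplus Rplus_assoc_law Rplus_comm Rplus_0_l.
HB.instance Definition _ :=
  Monoid.isComLaw.Build R 1 Rmult Rmult_assoc_law Rmult_comm Rmult_1_l.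
HB.instance Definition _ := Monoid.isMulLaw.Build R 0 Rmult Rmult_0_l Rmult_0_r.
HB.instance Definition _ :=
  Monoid.isAddLaw.Build R Rmult Rplus Rmult_plus_distr_r Rmult_plus_distr_l.

Definition kron {T : eqType} (a b : T) : R := if a == b then 1 else 0.

Section Rsum.
Variable I : finType.
Implicit Types F G : I -> R.

Lemma eq_rsum F G : (forall i, F i = G i) -> rsum F = rsum G.
Proof. by move=> FG; apply: eq_bigr => i _. Qed.

Lemma rsumD F G : rsum (fun i => F i + G i) = rsum F + rsum G.
Proof. exact: big_split. Qed.

Lemma rsumMl c F : rsum (fun i => c * F i) = c * rsum F.
Proof. by rewrite /rsum big_distrr. Qed.

Lemma rsumB F G : rsum (fun i => F i - G i) = rsum F - rsum G.
Proof.
rewrite (@eq_rsum _ (fun i => F i + (-1) * G i)); last by move=> i; ring.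
by rewrite rsumD rsumMl; ring.
Qed.

Lemma rsum_ge0 F : (forall i, 0 <= F i) -> 0 <= rsum F.
Proof.
move=> F_ge0; apply: (big_ind (fun x => 0 <= x)) => //; [lra | move=> *; lra].
Qed.

Lemma rsum_ge_term F a : (forall i, 0 <= F i) -> F a <= rsum F.
Proof.
move=> F_ge0; rewrite /rsum (bigD1 a) //=.
have : 0 <= \big[Rplus/0]_(i | i != a) F i.
  by apply: (big_ind (fun x => 0 <= x)) => //; [lra | move=> *; lra].
lra.
Qed.

Lemma rsum_eq0_term F a : (forall i, 0 <= F i) -> rsum F = 0 -> F a = 0.
Proof. by move=> F_ge0 F0; have := rsum_ge_term a F_ge0; have := F_ge0 a; lra. Qed.

Lemma rsum_kron F a : rsum (fun i => kron i a * F i) = F a.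
Proof.
rewrite /rsum (bigD1 a) //= /kron eqxx big1; first ring.
by move=> i /negbTE ->; ring.
Qed.

Lemma rsum_kronB F a b : rsum (fun i => (kron i a - kron i b) * F i) = F a - F b.
Proof.
rewrite (@eq_rsum _ (fun i => kron i a * F i - kron i b * F i)); last by move=> i; ring.
by rewrite rsumB !rsum_kron.
Qed.

Lemma rsum_kronB0 (a b : I) : rsum (fun i => kron i a - kron i b) = 0.
Proof.
rewrite (@eq_rsum _ (fun i => (kron i a - kron i b) * 1)); last by move=> i; ring.
by rewrite rsum_kronB; ring.
Qed.

Lemma is_derive_rsum (H : I -> R -> R) (H' : I -> R) x :
  (forall i, is_derive (H i) x (H' i)) ->
  is_derive (fun d => rsum (fun i => H i d)) x (rsum H').
Proof.
move=> dH; rewrite /rsum; elim: (index_enum I) => [|i r IH].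
  apply: (is_derive_ext (fun _ => 0)); first by move=> d; rewrite big_nil.
  by rewrite big_nil; exact: is_derive_const.
apply: (is_derive_ext (fun d => H i d + \big[Rplus/0]_(j <- r) H j d)).
  by move=> d; rewrite big_cons.
by rewrite big_cons; exact: is_derive_plus.
Qed.

(* The terms [d i - q i * rsum d / rsum q] sum to zero; if [rsum q = 0] they all vanish. *)
Lemma rsum_xlog_ratio_derivative (q d : I -> R) :
  (forall i, 0 <= q i) -> (forall i, q i = 0 -> d i = 0) ->
  rsum (fun i => d i * ln (q i / rsum q) + d i - q i * rsum d / rsum q) =
  rsum (fun i => d i * ln (q i / rsum q)).
Proof.
move=> q_ge0 dq.
rewrite rsumB rsumD.
have -> : rsum (fun i => q i * rsum d / rsum q) = rsum d / rsum q * rsum q.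
  by rewrite -rsumMl; apply: eq_rsum => i; rewrite /Rdiv; ring.
have [q0|qn0] := Req_dec (rsum q) 0.
  have d0 : rsum d = 0.
    by rewrite (@eq_rsum _ (fun _ => 0)) ?/rsum ?big1 // => i; apply/dq/rsum_eq0_term.
  by rewrite q0 d0; ring.
by field.
Qed.
End Rsum.

Lemma rsum_bool (F : bool -> R) : rsum F = F true + F false.
Proof. exact: big_bool. Qed.

Lemma exchange_rsum (I J : finType) (F : I -> J -> R) :
  rsum (fun i => rsum (fun j => F i j)) = rsum (fun j => rsum (fun i => F i j)).
Proof. exact: exchange_big. Qed.

Lemma is_derive_local_max_eq0 (f : R -> R) c l r : 0 < r -> is_derive f c l ->
  (forall x, c - r < x -> x < c + r -> f x <= f c) -> l = 0.
Proof.
move=> r_gt0 /is_derive_Reals df fmax.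
by apply: (deriv_maximum f (c - r) (c + r) c (exist _ l df)) => //; lra.
Qed.

Definition xlog_ratio (q s : R) : R := if Rlt_dec 0 q then q * ln (q / s) else 0.

Lemma is_derive_xlog_ratio q s d e : 0 <= q -> q <= s -> (q = 0 -> d = 0) ->
  is_derive (fun δ => xlog_ratio (q + δ * d) (s + δ * e)) 0
    (d * ln (q / s) + d - q * e / s).
Proof.
move=> q_ge0 qs dq; have [q_gt0|q0] := Rle_lt_or_eq_dec _ _ q_ge0; last first.
  subst q; rewrite dq //.
  apply: (is_derive_ext (fun _ => 0)); last first.
    have -> : 0 * ln (0 / s) + 0 - 0 * e / s = 0 by rewrite /Rdiv; ring.
    exact: is_derive_const.
  move=> δ; rewrite /xlog_ratio Rmult_0_r Rplus_0_r.
  by case: Rlt_dec => // h; lra.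
have near0 : locally 0 (fun δ => 0 < q + δ * d).
  have dabs : 0 < Rabs d + 1 by have := Rabs_pos d; lra.
  exists (mkposreal _ (Rdiv_lt_0_compat _ _ q_gt0 dabs)) => δ /=.
  rewrite /ball /= /AbsRing_ball /abs /minus /plus /opp /= Ropp_0 Rplus_0_r => hδ.
  have : q / (Rabs d + 1) * (Rabs d + 1) = q by field; lra.
  have := Rle_abs (- (δ * d)); rewrite Rabs_Ropp Rabs_mult.
  have := Rabs_pos d; have := Rabs_pos δ; nra.
apply: (is_derive_ext_loc (fun δ => (q + δ * d) * ln ((q + δ * d) / (s + δ * e)))).
  by apply: filter_imp near0 => δ pos; rewrite /xlog_ratio; case: Rlt_dec.
auto_derive.
  rewrite !Rmult_0_l !Rplus_0_r; split; [lra | split=> //].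
  by apply: Rdiv_lt_0_compat; lra.
by rewrite !Rmult_0_l !Rplus_0_r /Rdiv; field; lra.
Qed.

Lemma Rdiv_gt0_iff a b : 0 < b -> a / b > 0 <-> 0 < a.
Proof.
move=> b_gt0; split=> [/Rdiv_pos_cases [[]|[_ /Rlt_asym]] // | a_gt0].
exact: Rdiv_pos_pos.
Qed.

Lemma ln_ratio_eq_cross a b c d : 0 < a -> 0 <= b -> 0 < c -> 0 <= d ->
  ln (a / (a + b)) = ln (c / (c + d)) -> a * d = c * b.
Proof.
move=> a_gt0 b_ge0 c_gt0 d_ge0 /ln_inv eq_ratio.
have {}eq_ratio : a / (a + b) = c / (c + d) by apply: eq_ratio; apply: Rdiv_lt_0_compat; lra.
have : a * (c + d) = c * (a + b).
  transitivity (a / (a + b) * (a + b) * (c + d)); first by field; lra.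
  by rewrite eq_ratio; field; lra.
lra.
Qed.

Lemma exists_bool_gap (p : bool -> Prop) : ~ (p false <-> p true) ->
  exists t, p t /\ ~ p (~~ t).
Proof.
move=> gap; case: (classic (p false)) => [pf | npf].
  by exists false; split=> // pt; apply: gap.
exists true; split=> //; apply: NNPP => npt; apply: gap; tauto.
Qed.

Section JointDistributions.
Variables X Y : finType.
Implicit Types P Q D : jdist X Y.

Definition log_cond Q t x y : R := ln (Q t x y / PXY Q x y).

Definition perturb Q D (δ : R) : jdist X Y := fun t x y => Q t x y + δ * D t x y.

Lemma perturb0 Q D : perturb Q D 0 = Q.
Proof.
by apply: functional_extensionality => t; apply: functional_extensionality => x;
  apply: functional_extensionality => y; rewrite /perturb; ring.
Qed.

Lemma PXY_perturb Q D δ x y :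
  PXY (perturb Q D δ) x y = PXY Q x y + δ * rsum (fun t => D t x y).
Proof. by rewrite /PXY rsumD rsumMl. Qed.

Lemma DeltaP_perturb P Q D m δ : DeltaP P Q ->
  (forall t x y, D t x y <> 0 -> m <= Q t x y) ->
  (forall t x y, Rabs (D t x y) <= 1) ->
  (forall t x, rsum (fun y => D t x y) = 0) ->
  (forall t y, rsum (fun x => D t x y) = 0) ->
  Rabs δ < m -> DeltaP P (perturb Q D δ).
Proof.
move=> [[Q_ge0 Q1] [QX QY]] Dsupp Dle1 Dx Dy δm.
have PXT_perturb t x : PXT (perturb Q D δ) x t = PXT Q x t.
  by rewrite /PXT /perturb rsumD rsumMl Dx Rmult_0_r Rplus_0_r.
have PYT_perturb t y : PYT (perturb Q D δ) y t = PYT Q y t.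
  by rewrite /PYT /perturb rsumD rsumMl Dy Rmult_0_r Rplus_0_r.
split; [split | split] => [t x y | | x t | y t].
- rewrite /perturb; have [->|D0] := Req_dec (D t x y) 0; first by have := Q_ge0 t x y; lra.
  have := Dsupp _ _ _ D0; have := Dle1 t x y; have := Rabs_pos δ.
  have := Rle_abs (- (δ * D t x y)); rewrite Rabs_Ropp Rabs_mult; nra.
- by rewrite -Q1; apply: eq_rsum => t; apply: eq_rsum => x; apply: PXT_perturb.
- by rewrite PXT_perturb.
- by rewrite PYT_perturb.
Qed.

Lemma is_derive_condEntropy_perturb Q D :
  (forall t x y, 0 <= Q t x y) -> (forall t x y, Q t x y = 0 -> D t x y = 0) ->
  is_derive (fun δ => condEntropy_T_XY (perturb Q D δ)) 0
    (- rsum (fun t => rsum (fun x => rsum (fun y => D t x y * log_cond Q t x y)))).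
Proof.
move=> Q_ge0 DQ.
rewrite exchange_rsum (eq_rsum (fun x => exchange_rsum _)).
rewrite -(eq_rsum (fun x => eq_rsum (fun y => rsum_xlog_ratio_derivative
           (fun t => Q_ge0 t x y) (fun t => DQ t x y)))).
rewrite -(eq_rsum (fun x => exchange_rsum _)) -exchange_rsum.
apply: (is_derive_ext (fun δ => - rsum (fun t => rsum (fun x => rsum (fun y =>
          xlog_ratio (Q t x y + δ * D t x y)
                     (PXY Q x y + δ * rsum (fun t => D t x y))))))).
  move=> δ; rewrite /condEntropy_T_XY; congr (- _).
  by do 3!(apply: eq_rsum => ?); rewrite PXY_perturb.
apply/is_derive_opp/is_derive_rsum => t; apply: is_derive_rsum => x.
apply: is_derive_rsum => y; apply: is_derive_xlog_ratio; [exact: Q_ge0 | | exact: DQ].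
by apply: (rsum_ge_term t (fun t' => Q_ge0 t' x y)).
Qed.

Lemma argmax_stationary P Q D m : is_argmax_H P Q -> 0 < m ->
  (forall t x y, D t x y <> 0 -> m <= Q t x y) ->
  (forall t x y, Rabs (D t x y) <= 1) ->
  (forall t x, rsum (fun y => D t x y) = 0) ->
  (forall t y, rsum (fun x => D t x y) = 0) ->
  rsum (fun t => rsum (fun x => rsum (fun y => D t x y * log_cond Q t x y))) = 0.
Proof.
move=> [QP Qmax] m_gt0 Dsupp Dle1 Dx Dy.
have Q_ge0 := proj1 (proj1 QP).
have DQ t x y : Q t x y = 0 -> D t x y = 0.
  by move=> Q0; have [|/Dsupp] := Req_dec (D t x y) 0; lra.
suff : - rsum (fun t => rsum (fun x => rsum (fun y => D t x y * log_cond Q t x y))) = 0.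
  by lra.
apply: (is_derive_local_max_eq0 m_gt0 (is_derive_condEntropy_perturb Q_ge0 DQ)) => δ δ1 δ2.
rewrite perturb0; apply/Qmax/(DeltaP_perturb QP Dsupp) => //.
by apply: Rabs_def1; lra.
Qed.

Definition rect_dir t0 x1 x2 y1 y2 : jdist X Y :=
  fun t x y => kron t t0 * ((kron x x1 - kron x x2) * (kron y y1 - kron y y2)).

Lemma rsum_rect_dir t0 x1 x2 y1 y2 (F : bool -> X -> Y -> R) :
  rsum (fun t => rsum (fun x => rsum (fun y => rect_dir t0 x1 x2 y1 y2 t x y * F t x y))) =
  F t0 x1 y1 - F t0 x1 y2 - F t0 x2 y1 + F t0 x2 y2.
Proof.
rewrite (@eq_rsum _ _ (fun t => kron t t0 * rsum (fun x => (kron x x1 - kron x x2) *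
           rsum (fun y => (kron y y1 - kron y y2) * F t x y)))); last first.
  move=> t; rewrite -rsumMl; apply: eq_rsum => x; rewrite -!rsumMl.
  by apply: eq_rsum => y; rewrite /rect_dir !Rmult_assoc.
rewrite rsum_kron (@eq_rsum _ _ (fun x => (kron x x1 - kron x x2) * (F t0 x y1 - F t0 x y2))).
  by rewrite rsum_kronB; ring.
by move=> x; rewrite rsum_kronB.
Qed.

Lemma rect_dir_rowsum0 t0 x1 x2 y1 y2 t x :
  rsum (fun y => rect_dir t0 x1 x2 y1 y2 t x y) = 0.
Proof. by rewrite /rect_dir !rsumMl rsum_kronB0; ring. Qed.

Lemma rect_dir_colsum0 t0 x1 x2 y1 y2 t y :
  rsum (fun x => rect_dir t0 x1 x2 y1 y2 t x y) = 0.
Proof.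
rewrite (@eq_rsum _ _ (fun x => kron t t0 * (kron y y1 - kron y y2) * (kron x x1 - kron x x2))).
  by rewrite rsumMl rsum_kronB0; ring.
by move=> x; rewrite /rect_dir; ring.
Qed.

Definition log_ratio_additive Q : Prop :=
  forall t x1 x2 y1 y2,
  0 < Q t x1 y1 -> 0 < Q t x1 y2 -> 0 < Q t x2 y1 -> 0 < Q t x2 y2 ->
  log_cond Q t x1 y1 - log_cond Q t x1 y2 - log_cond Q t x2 y1 + log_cond Q t x2 y2 = 0.

Lemma argmax_log_ratio_additive P Q : is_argmax_H P Q -> log_ratio_additive Q.
Proof.
move=> Qmax t0 x1 x2 y1 y2 Q11 Q12 Q21 Q22.
set m := Rmin (Rmin (Q t0 x1 y1) (Q t0 x1 y2)) (Rmin (Q t0 x2 y1) (Q t0 x2 y2)).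
rewrite -(rsum_rect_dir t0 x1 x2 y1 y2 (log_cond Q)).
apply: (argmax_stationary (m := m) Qmax).
- by rewrite /m; repeat apply: Rmin_glb_lt.
- have [m11 m12] : m <= Q t0 x1 y1 /\ m <= Q t0 x1 y2.
    by split; apply: Rle_trans (Rmin_l _ _) _; [apply: Rmin_l | apply: Rmin_r].
  have [m21 m22] : m <= Q t0 x2 y1 /\ m <= Q t0 x2 y2.
    by split; apply: Rle_trans (Rmin_r _ _) _; [apply: Rmin_l | apply: Rmin_r].
  move=> t x y; rewrite /rect_dir /kron.
  by do 5!case: eqP => [?|?]; subst => //= D0; exfalso; apply: D0; ring.
- move=> t x y; apply: Rabs_le; rewrite /rect_dir /kron.
  by do 5!case: eqP => _; lra.
- exact: rect_dir_rowsum0.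
- exact: rect_dir_colsum0.
Qed.

Lemma is_dist_le1 Q t x y : is_dist Q -> Q t x y <= 1.
Proof.
move=> [Q_ge0 <-].
apply: Rle_trans (rsum_ge_term t (fun t => rsum_ge0 (fun x => rsum_ge0 (Q_ge0 t x)))).
apply: Rle_trans (rsum_ge_term x (fun x => rsum_ge0 (Q_ge0 t x))).
exact: rsum_ge_term.
Qed.

(* [Q + δ (Q - Q1)] lies in the affine hull, hence in [DeltaP P] for small [δ];
   then [(1 + δ) Q >= δ Q1]. *)
Lemma rel_interior_pos P Q Q1 t x y : rel_interior (DeltaP P) Q ->
  DeltaP P Q1 -> 0 < Q1 t x y -> 0 < Q t x y.
Proof.
move=> [QP [eps [eps_gt0 ball]]] Q1P Q1_gt0.
set δ := eps / 2.
have Q'P : DeltaP P (fun t x y => (1 + δ) * Q t x y + (- δ) * Q1 t x y).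
  apply: ball => [|t' x' y'].
    exists [:: (1 + δ, Q); (- δ, Q1)]; split; [|split].
    - by move=> p /= [<-|[<-|[]]].
    - by rewrite !big_cons big_nil /=; ring.
    - by move=> t' x' y'; rewrite !big_cons big_nil /=; ring.
  have := is_dist_le1 t' x' y' (proj1 QP); have := is_dist_le1 t' x' y' (proj1 Q1P).
  have := proj1 (proj1 QP) t' x' y'; have := proj1 (proj1 Q1P) t' x' y'.
  by move=> *; apply: Rabs_def1; rewrite /δ; nra.
have := proj1 (proj1 Q'P) t x y; rewrite /δ /=; nra.
Qed.

Definition indep_coupling P : jdist X Y := fun t x y => PXT P x t * PYT P y t / PT P t.

Lemma PXT_ge0 Q x t : (forall t x y, 0 <= Q t x y) -> 0 <= PXT Q x t.
Proof. by move=> Q_ge0; apply: rsum_ge0 => y; apply: Q_ge0. Qed.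

Lemma PYT_ge0 Q y t : (forall t x y, 0 <= Q t x y) -> 0 <= PYT Q y t.
Proof. by move=> Q_ge0; apply: rsum_ge0 => x; apply: Q_ge0. Qed.

Lemma DeltaP_indep_coupling P : is_dist P -> (forall t, 0 < PT P t) ->
  DeltaP P (indep_coupling P).
Proof.
move=> [P_ge0 P1] PT_gt0.
have PXT_indep x t : PXT (indep_coupling P) x t = PXT P x t.
  rewrite [LHS]/PXT /indep_coupling (@eq_rsum _ _ (fun y => PXT P x t / PT P t * PYT P y t)).
    by rewrite rsumMl /PYT -exchange_rsum -/(PT P t); field; apply/Rgt_not_eq/PT_gt0.
  by move=> y; rewrite /Rdiv; ring.
split; [split | split] => [t x y | | x t | y t].
- rewrite /indep_coupling; apply: Rmult_le_pos; last exact/Rlt_le/Rinv_0_lt_compat.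
  by apply: Rmult_le_pos; [apply: PXT_ge0 | apply: PYT_ge0].
- by rewrite -P1; apply: eq_rsum => t; apply: eq_rsum => x; apply: PXT_indep.
- exact: PXT_indep.
- rewrite [LHS]/PYT /indep_coupling (@eq_rsum _ _ (fun x => PYT P y t / PT P t * PXT P x t)).
    by rewrite rsumMl -/(PT P t); field; apply/Rgt_not_eq/PT_gt0.
  by move=> x; rewrite /Rdiv; ring.
Qed.

Definition product_support P Q : Prop :=
  forall t x y, 0 < Q t x y <-> 0 < PXT P x t /\ 0 < PYT P y t.

Lemma rel_interior_product_support P Q : is_dist P -> (forall t, 0 < PT P t) ->
  rel_interior (DeltaP P) Q -> product_support P Q.
Proof.
move=> Pdist PT_gt0 Qint t x y; have [[Q_ge0 _] [QX QY]] := proj1 Qint.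
split=> [Q_gt0 | [PX_gt0 PY_gt0]].
  rewrite -QX -QY; split; apply: Rlt_le_trans Q_gt0 _; exact: rsum_ge_term.
apply: (rel_interior_pos Qint (DeltaP_indep_coupling Pdist PT_gt0)).
by apply: Rdiv_lt_0_compat => //; apply: Rmult_lt_0_compat.
Qed.

Lemma PXY_bool Q t x y : PXY Q x y = Q t x y + Q (~~ t) x y.
Proof. by rewrite /PXY rsum_bool; case: t => /=; ring. Qed.

Lemma log_cond_eq0 Q t x y : 0 < Q t x y -> Q (~~ t) x y = 0 -> log_cond Q t x y = 0.
Proof.
by move=> Q_gt0 Q0; rewrite /log_cond (PXY_bool Q t) Q0 Rplus_0_r /Rdiv Rinv_r ?ln_1 //; lra.
Qed.

Lemma CI_T_X_given_Y_of_cross_ratio Q :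
  (forall x x' y, Q false x y * Q true x' y = Q false x' y * Q true x y) ->
  CI_T_X_given_Y Q.
Proof.
move=> cross t x y; rewrite /PY rsum_bool /PXY rsum_bool.
have : Q true x y * PYT Q y false = PYT Q y true * Q false x y.
  rewrite /PYT -rsumMl Rmult_comm -rsumMl.
  by apply: eq_rsum => x'; rewrite Rmult_comm cross.
by case: t; nra.
Qed.

Section SupportGap.
Variables P Q : jdist X Y.
Hypotheses (Q_ge0 : forall t x y, 0 <= Q t x y) (Qsupp : product_support P Q)
  (Qadd : log_ratio_additive Q).

Lemma Q_eq0_outside t x y : ~ (0 < PXT P x t /\ 0 < PYT P y t) -> Q t x y = 0.
Proof.
move=> out; have [|//] := Rle_lt_or_eq_dec _ _ (Q_ge0 t x y).
by move/Qsupp.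
Qed.

Lemma cross_ratio_of_support_gap t0 y0 :
  0 < PYT P y0 t0 -> ~ 0 < PYT P y0 (~~ t0) ->
  (forall x, 0 < PXT P x (~~ t0) -> 0 < PXT P x t0) ->
  forall x x' y, Q t0 x y * Q (~~ t0) x' y = Q t0 x' y * Q (~~ t0) x y.
Proof.
move=> PY0 PY0' Xsub.
have vanish x x' y : Q t0 x y = 0 -> Q t0 x' y = 0 \/ Q (~~ t0) x y = 0.
  move=> Q0; have nsupp : ~ (0 < PXT P x t0 /\ 0 < PYT P y t0) by move/Qsupp; lra.
  case: (classic (0 < PYT P y t0)) => PY.
    by right; apply: Q_eq0_outside => -[/Xsub PX _]; tauto.
  by left; apply: Q_eq0_outside => -[].
move=> x x' y.
have [Qx|Qx0] := Rle_lt_or_eq_dec _ _ (Q_ge0 t0 x y); last first.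
  by rewrite -Qx0; case: (vanish _ x' _ (esym Qx0)) => ->; ring.
have [Qx'|Qx'0] := Rle_lt_or_eq_dec _ _ (Q_ge0 t0 x' y); last first.
  by rewrite -Qx'0; case: (vanish _ x _ (esym Qx'0)) => ->; ring.
have [[PX PY] [PX' _]] := (proj1 (Qsupp _ _ _) Qx, proj1 (Qsupp _ _ _) Qx').
have Qy0 x1 : 0 < PXT P x1 t0 -> 0 < Q t0 x1 y0 by move=> PX1; apply/Qsupp.
have Q'y0 x1 : Q (~~ t0) x1 y0 = 0 by apply: Q_eq0_outside => -[].
have := Qadd Qx (Qy0 _ PX) Qx' (Qy0 _ PX').
rewrite !(log_cond_eq0 (Qy0 _ _) (Q'y0 _)) // /log_cond !(PXY_bool Q t0) => eq_log.
by apply: ln_ratio_eq_cross => //; lra.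
Qed.

Lemma CI_T_X_given_Y_of_support_gap :
  (forall x, 0 < PXT P x false <-> 0 < PXT P x true) ->
  ~ (forall y, 0 < PYT P y false <-> 0 < PYT P y true) -> CI_T_X_given_Y Q.
Proof.
move=> Xeq /not_all_ex_not [y0 /(@exists_bool_gap (fun t => 0 < PYT P y0 t))].
move=> [t0 [PY0 PY0']].
have Xsub x : 0 < PXT P x (~~ t0) -> 0 < PXT P x t0.
  by case: t0 {PY0 PY0'}; [apply: (proj1 (Xeq x)) | apply: (proj2 (Xeq x))].
have cross := cross_ratio_of_support_gap PY0 PY0' Xsub.
apply: CI_T_X_given_Y_of_cross_ratio => x x' y.
by case: t0 cross {PY0 PY0' Xsub} => /= cross; [have := cross x' x y; lra | apply: cross].
Qed.
End SupportGap.
End JointDistributions.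

Definition swapXY (X Y : finType) (Q : jdist X Y) : jdist Y X := fun t y x => Q t x y.

Lemma product_support_swapXY (X Y : finType) (P Q : jdist X Y) :
  product_support P Q -> product_support (swapXY P) (swapXY Q).
Proof. by move=> Qsupp t y x; rewrite [X in X <-> _]Qsupp; tauto. Qed.

Lemma log_ratio_additive_swapXY (X Y : finType) (Q : jdist X Y) :
  log_ratio_additive Q -> log_ratio_additive (swapXY Q).
Proof.
move=> Qadd t y1 y2 x1 x2 Q11 Q12 Q21 Q22.
by have := Qadd t x1 x2 y1 y2 Q11 Q21 Q12 Q22; rewrite /log_cond /PXY /swapXY; lra.
Qed.

Theorem mainTheorem15 (X Y : finType) (P Qs : jdist X Y) :
  is_dist P -> PT P false > 0 -> PT P true > 0 ->
  is_argmax_H P Qs ->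
  rel_interior (DeltaP P) Qs ->
  ((forall x, Xsupp P false x <-> Xsupp P true x) ->
   ~ (forall y, Ysupp P false y <-> Ysupp P true y) ->
   CI_T_X_given_Y Qs) /\
  ((forall y, Ysupp P false y <-> Ysupp P true y) ->
   ~ (forall x, Xsupp P false x <-> Xsupp P true x) ->
   CI_T_Y_given_X Qs).
Proof.
move=> Pdist PT0 PT1 Qmax Qint.
have PT_gt0 : forall t, 0 < PT P t by case.
have Q_ge0 := proj1 (proj1 (proj1 Qmax)).
have Qsupp := rel_interior_product_support Pdist PT_gt0 Qint.
have Qadd := argmax_log_ratio_additive Qmax.
have Xsupp_iff t x : Xsupp P t x <-> 0 < PXT P x t := Rdiv_gt0_iff _ (PT_gt0 t).
have Ysupp_iff t y : Ysupp P t y <-> 0 < PYT P y t := Rdiv_gt0_iff _ (PT_gt0 t).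
split=> [Xeq Yneq | Yeq Xneq].
- apply: (CI_T_X_given_Y_of_support_gap Q_ge0 Qsupp Qadd) => [x | Yeq].
    by rewrite -!Xsupp_iff.
  by apply: Yneq => y; rewrite !Ysupp_iff.
- have CI : CI_T_X_given_Y (swapXY Qs).
    apply: (CI_T_X_given_Y_of_support_gap (P := swapXY P) (fun t y x => Q_ge0 t x y)
              (product_support_swapXY Qsupp) (log_ratio_additive_swapXY Qadd)).
      by move=> y; have := Yeq y; rewrite !Ysupp_iff.
    by move=> Xeq; apply: Xneq => x; rewrite !Xsupp_iff; apply: Xeq.
  by move=> t x y; apply: CI.
Qed.
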